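(* Let $u$ be a parking sorted configuration on $K_{m,n}$, and for $s\in\mathbb Z$ let $u[s]$ be the configuration equal to $u$ outside the sink and equal to $s$ at $a_m$ (each $u[s]$ is again parking sorted). Let $F_u(x,y)=\sum_{s\in\mathbb Z}x^{\mathrm{xpara}(u[s])}y^{\mathrm{ypara}(u[s])}$. Let $S_u^+=\{s\in\mathbb Z: s\text{ is left and } s+1\text{ is right}\}$ and $S_u^-=\{s\in\mathbb Z: s\text{ is right and } s+1\text{ is left}\}$ (these are finite, with $|S_u^+|=|S_u^-|+1$). Then $$F_u(x,y)=\frac{1-xy}{(1-x)(1-y)}\Big(\sum_{s\in S_u^+}x^{\mathrm{xpara}(u[s])}y^{\mathrm{ypara}(u[s])}-\sum_{s\in S_u^-}x^{\mathrm{xpara}(u[s])}y^{\mathrm{ypara}(u[s])}\Big).$$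
   Context: Let $m,n\ge 1$. $K_{m,n}$ is the complete bipartite graph with vertex set $V=A_m\sqcup B_n$, $A_m=\{a_1,\dots,a_m\}$, $B_n=\{b_1,\dots,b_n\}$, with exactly one edge $\{a_i,b_j\}$ for every $i,j$; $a_m$ is the sink. A configuration is a function $u:V\to\mathbb Z$. For $c\in V$ with graph degree $d_c$, $\Delta^{(c)}=d_c e_c-\sum_{c'\text{ adjacent to }c}e_{c'}$ ($e_c$ the indicator of $c$), $\Delta^{(C)}=\sum_{c\in C}\Delta^{(c)}$. $u$ is parking if $u_c\ge0$ for $c\ne a_m$ and for every non-empty $C\subseteq V\setminus\{a_m\}$, $u-\Delta^{(C)}$ has a negative value at a vertex other than $a_m$; sorted if $u_{a_1}\le\dots\le u_{a_{m-1}}$ and $u_{b_1}\le\dots\le u_{b_n}$. The $r$-vector of a parking sorted $u$ is $(r_1,\dots,r_n)$, $r_i=u_{b_i}+1-\#\{j\in\{1,\dots,m-1\}: u_{a_j}+1\le i-1\}$; it depends only on the values outside the sink. For $\sigma\in\mathbb Z$ write $\sigma=qn+t$ with $0\le t<n$; $\sigma$ is called right if $q+r_{t+1}\ge1$ and left otherwise. $\mathrm{xpara}(u)=\#\{\sigma>u_{a_m}:\sigma\text{ left}\}$ and $\mathrm{ypara}(u)=\#\{\sigma\le u_{a_m}:\sigma\text{ right}\}$ (equivalently $\mathrm{xpara}(u)=(m-1)(n-1)+\mathrm{rank}(u)-\mathrm{degree}(u)$, $\mathrm{ypara}(u)=\mathrm{rank}(u)+1$). The identity is one of formal power series in $x,y$.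 *)

From HB Require Import structures.
From mathcomp Require Import all_boot all_order all_algebra.
From Stdlib Require Import ClassicalEpsilon.
Set Implicit Arguments. Unset Strict Implicit. Unset Printing Implicit Defensive.
Import Order.TTheory GRing.Theory Num.Theory.
Local Open Scope ring_scope.

Definition zwindow (N : nat) : seq int :=
  [seq (k%:Z - N%:Z) | k <- iota 0 (N.*2).+1].

Definition ifinite (P : pred int) : Prop :=
  exists N : nat, forall z, P z -> (absz z <= N)%N.

(* cardinality of a finite set P of integers (junk value 0 if P is infinite);
   independent of the chosen bound N *)
Definition icard (P : pred int) : nat :=
  match excluded_middle_informative (ifinite P) with
  | left H => count P (zwindow (proj1_sig (constructive_indefinite_description _ H)))
  | right _ => 0%N
  end.

(* vertices: inl i = a_{i+1} (i < m), inr j = b_{j+1} (j < n) *)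
Definition V (m n : nat) : finType := ('I_m + 'I_n)%type.

(* the sink is a_m, i.e. inl with index m-1 *)
Definition is_sink m n (v : V m n) : bool :=
  match v with inl i => val i == m.-1 | inr _ => false end.

Definition adj m n (v w : V m n) : bool :=
  match v, w with
  | inl _, inr _ => true
  | inr _, inl _ => true
  | _, _ => false
  end.

Definition deg m n (c : V m n) : nat := #|[set w | adj c w]|.

Definition config m n := V m n -> int.

Definition Delta1 m n (c : V m n) : config m n :=
  fun v => (if v == c then (deg c)%:Z else 0) - (if adj c v then 1 else 0).

Definition DeltaS m n (C : {set V m n}) : config m n :=
  fun v => \sum_(c in C) Delta1 c v.

Definition parking m n (u : config m n) : Prop :=
  (forall c : V m n, ~~ is_sink c -> 0 <= u c) /\
  (forall C : {set V m n}, C != set0 -> (forall c, c \in C -> ~~ is_sink c) ->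
     exists v : V m n, ~~ is_sink v /\ u v - DeltaS C v < 0).

Definition sorted_config m n (u : config m n) : Prop :=
  (forall i j : 'I_m, (i <= j)%N -> (j < m.-1)%N -> u (inl i) <= u (inl j)) /\
  (forall i j : 'I_n, (i <= j)%N -> u (inr i) <= u (inr j)).

(* r_{k+1} = u_{b_{k+1}} + 1 - #{ j in 1..m-1 : u_{a_j} + 1 <= k }  (k = 0..n-1) *)
Definition rvec m n (u : config m n) (k : 'I_n) : int :=
  u (inr k) + 1 - (#|[set j : 'I_m | (val j < m.-1)%N && (u (inl j) + 1 <= (val k)%:Z)]|)%:Z.

Definition rvec_nat m n (u : config m n) (k : nat) : int :=
  oapp (fun o : 'I_n => rvec u o) 0 (insub k).

Definition right_pt m n (u : config m n) (sigma : int) : bool :=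
  1 <= (sigma %/ n%:Z)%Z + rvec_nat u (absz (sigma %% n%:Z)%Z).

Definition left_pt m n (u : config m n) (sigma : int) : bool := ~~ right_pt u sigma.

Definition sinkval m n (u : config m n) : int :=
  oapp (fun i : 'I_m => u (inl i)) 0 (insub m.-1).

Definition xpara m n (u : config m n) : nat :=
  icard (fun sigma => (sinkval u < sigma) && left_pt u sigma).

Definition ypara m n (u : config m n) : nat :=
  icard (fun sigma => (sigma <= sinkval u) && right_pt u sigma).

Definition upd m n (u : config m n) (s : int) : config m n :=
  fun v => if is_sink v then s else u v.

Definition Splus m n (u : config m n) : pred int :=
  fun s => left_pt u s && right_pt u (s + 1).
Definition Sminus m n (u : config m n) : pred int :=
  fun s => right_pt u s && left_pt u (s + 1).

(* a series is its coefficient function: (i, j) |-> [x^i y^j] *)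
Definition series := nat -> nat -> int.

Definition smul (f g : series) : series :=
  fun i j => \sum_(a < i.+1) \sum_(b < j.+1) f a b * g (i - a)%N (j - b)%N.

Definition one_minus_xy : series :=
  fun i j => ((i == 0%N) && (j == 0%N))%:R - ((i == 1%N) && (j == 1%N))%:R.

(* 1 / ((1 - x)(1 - y)) = sum_{a,b} x^a y^b *)
Definition inv_1mx_1my : series := fun _ _ => 1.

Definition one_minus_x_one_minus_y : series :=
  fun i j => ((i <= 1)%N && (j <= 1)%N)%:R * (-1) ^+ (i + j).

Definition mono_coef m n (u : config m n) (P : pred int) (i j : nat) : pred int :=
  fun s => P s && (xpara (upd u s) == i) && (ypara (upd u s) == j).

Definition Fu m n (u : config m n) : series :=
  fun i j => (icard (mono_coef u predT i j))%:Z.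

Definition Gu m n (u : config m n) : series :=
  fun i j => (icard (mono_coef u (Splus u) i j))%:Z - (icard (mono_coef u (Sminus u) i j))%:Z.

From HB Require Import structures.
From mathcomp Require Import all_boot all_order all_algebra zify ring.
From Stdlib Require Import FunctionalExtensionality ClassicalEpsilon.
Set Implicit Arguments. Unset Strict Implicit. Unset Printing Implicit Defensive.
Import Order.TTheory GRing.Theory Num.Theory.
Local Open Scope ring_scope.

(* Write R := right_pt u. Only the sink value s changes between the configurations u[s], and
   xpara (u[s]) = X s := #{z > s | ~ R z}, ypara (u[s]) = Y s := #{z <= s | R z}. Since the
   r-vector is bounded, R holds far to the right and fails far to the left, so X and Y are
   finite. Going from s to s + 1 either increases Y by one (if R (s + 1)) or decreases X by one,
   so s |-> (X s, Y s) walks down a staircase and Y s - X s - s is constant; in particular the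
   point determines s, and F_u is the indicator series of the staircase.
   With jump s := R (s + 1) - R s (so that G_u = sum_s jump s x^(X s) y^(Y s)), the coefficient
   of x^i y^j in G_u / ((1 - x)(1 - y)) is the sum of jump over the quadrant {X < i + 1, Y < j + 1},
   an interval of integers at whose left end R fails and just past whose right end R holds:
   it is 1 if the staircase meets the quadrant and 0 otherwise. Multiplying by 1 - xy leaves
   1 exactly when the staircase passes through (i, j). *)

Lemma mem_zwindow N z : (z \in zwindow N) = (absz z <= N)%N.
Proof.
apply/mapP/idP => [[k] | hz]; first by rewrite mem_iota => /andP[_ hk] ->; lia.
by exists (absz (z + N%:Z)); [rewrite mem_iota /=|]; lia.
Qed.

Lemma zwindow_uniq N : uniq (zwindow N).
Proof. by rewrite map_inj_uniq ?iota_uniq // => a b /=; lia. Qed.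

Lemma count_uniq_support (T : eqType) (P : pred T) s1 s2 :
  uniq s1 -> uniq s2 -> (forall z, P z -> z \in s1) -> (forall z, P z -> z \in s2) ->
  count P s1 = count P s2.
Proof.
move=> s1_uniq s2_uniq P_s1 P_s2; rewrite -!size_filter; apply: perm_size.
apply: uniq_perm; rewrite ?filter_uniq // => z; rewrite !mem_filter.
by case Pz: (P z); rewrite //= (P_s1 _ Pz) (P_s2 _ Pz).
Qed.

Lemma count_subsingleton (T : eqType) (P : pred T) s :
  uniq s -> (forall x y, P x -> P y -> x = y) -> count P s = has P s.
Proof.
move=> s_uniq P_sub1; case: hasP => [[x xs Px] | noP]; last first.
  by apply/eqP; rewrite -leqn0 leqNgt -has_count; apply/hasP.
rewrite (eq_count (a2 := pred1 x)) ?count_uniq_mem ?xs // => z /=.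
by apply/idP/eqP => [/P_sub1/(_ Px) | ->].
Qed.

Lemma icardE (P : pred int) N : (forall z, P z -> (absz z <= N)%N) ->
  icard P = count P (zwindow N).
Proof.
move=> P_N; rewrite /icard; case: excluded_middle_informative => [P_fin|]; last first.
  by case; exists N.
case: constructive_indefinite_description => N0 P_N0; rewrite [proj1_sig _]/=.
by apply: count_uniq_support; rewrite ?zwindow_uniq // => z Pz; rewrite mem_zwindow; auto.
Qed.

Lemma eq_icard (P Q : pred int) : P =1 Q -> icard P = icard Q.
Proof. by move=> /functional_extensionality ->. Qed.

Lemma sub_icard (P Q : pred int) : ifinite Q -> subpred P Q -> (icard P <= icard Q)%N.
Proof.
move=> [N Q_N] PQ; rewrite !(icardE (N := N)) ?sub_count // => z /PQ; exact: Q_N.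
Qed.

Lemma icardD1 (P : pred int) a : ifinite P ->
  icard P = (icard (fun z => (z != a) && P z) + P a)%N.
Proof.
move=> [N P_N]; rewrite !(icardE (N := maxn N (absz a))); first last.
- by move=> z /P_N; lia.
- by move=> z /andP[_ /P_N]; lia.
have a_w : a \in zwindow (maxn N (absz a)) by rewrite mem_zwindow; lia.
suff -> s : count P s = (count (fun z => (z != a) && P z) s + P a * count_mem a s)%N.
  by rewrite count_uniq_mem ?zwindow_uniq // a_w muln1.
elim: s => [|z s /= ->]; first by rewrite muln0.
by case: eqP => [-> | _]; case: (P _); rewrite /= ?mul1n ?mul0n; ring.
Qed.

(** * Coefficients of series products *)

Lemma natr_count (T : Type) (P : pred T) (s : seq T) :
  (count P s)%:R = \sum_(x <- s) (P x)%:R :> int.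
Proof. by rewrite -sumn_count sumnE big_map natr_sum. Qed.

Lemma sum_ord_eq (F : nat -> int) (n k : nat) :
  \sum_(a < n) F a * (a == k :> nat)%:R = F k * (k < n)%:R.
Proof.
elim: n => [|n IH]; first by rewrite big_ord0 mulr0.
rewrite big_ord_recr /= IH.
case: (eqVneq n k) => [<- | nk]; first by rewrite ltnn ltnSn mulr0 mulr1 add0r.
by rewrite mulr0 addr0 (ltnS k n) (leq_eqVlt k n) (eq_sym k) (negbTE nk).
Qed.

Lemma sum_ord_subn_eq (F : nat -> int) (i x : nat) :
  \sum_(a < i.+1) F a * (x == (i - a)%N)%:R = F (i - x)%N * (x <= i)%N%:R.
Proof.
case: (leqP x i) => [xi | ix]; last first.
  rewrite big1 ?mulr0 // => a _.
  by rewrite (_ : (x == (i - a)%N) = false) ?mulr0 //; apply/eqP; lia.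
rewrite (eq_bigr (fun a : 'I_i.+1 => F a * (a == (i - x)%N :> nat)%:R)); last first.
  by move=> a _; congr (_ * _%:R); apply/eqP/eqP; have := ltn_ord a; lia.
by rewrite sum_ord_eq ltnS leq_subr.
Qed.

Lemma sum_ord_eq1 (n k : nat) : \sum_(a < n) (a == k :> nat)%:R = (k < n)%:R :> int.
Proof.
by rewrite -[RHS]mul1r -(sum_ord_eq (fun=> 1)); apply: eq_bigr => a _; rewrite mul1r.
Qed.

Lemma smul_one_minus_xy_invE (a b : nat) :
  smul one_minus_xy inv_1mx_1my a b = 1 - ((0 < a)%N && (0 < b)%N)%:R.
Proof.
rewrite /smul /inv_1mx_1my /one_minus_xy.
under eq_bigr => a' _ do under eq_bigr => b' _ do rewrite mulr1 -!mulnb !natrM.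
under eq_bigr => a' _ do rewrite sumrB.
by rewrite sumrB -!big_distrlr /= !sum_ord_eq1; lia.
Qed.

Lemma sum_hook_kernel (x y i j : nat) :
  \sum_(a < i.+1) \sum_(b < j.+1)
     (1 - ((0 < a)%N && (0 < b)%N)%:R) * ((x == (i - a)%N) && (y == (j - b)%N))%:R
  = ((x < i.+1)%N && (y < j.+1)%N)%:R - ((x < i)%N && (y < j)%N)%:R :> int.
Proof.
rewrite (eq_bigr (fun a : 'I_i.+1 =>
    (1 - ((0 < a)%N && (0 < j - y)%N)%:R) * (y <= j)%N%:R * (x == (i - a)%N)%:R)); last first.
  move=> a _; rewrite -(sum_ord_subn_eq (fun b => (1 - ((0 < a)%N && (0 < b)%N)%:R))) mulr_suml.
  by apply: eq_bigr => b _; rewrite -(mulnb (x == _)) natrM; ring.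
rewrite (sum_ord_subn_eq (fun a => (1 - ((0 < a)%N && (0 < j - y)%N)%:R) * (y <= j)%N%:R)).
lia.
Qed.

Lemma coef_smul_hook (G : series) (g : int -> int) (X Y : int -> nat) (w : seq int) (i j : nat) :
  (forall a b, G a b = \sum_(s <- w) g s * ((X s == a) && (Y s == b))%:R) ->
  smul (smul one_minus_xy inv_1mx_1my) G i j =
  \sum_(s <- w) g s * (((X s < i.+1)%N && (Y s < j.+1)%N)%:R - ((X s < i)%N && (Y s < j)%N)%:R).
Proof.
move=> G_sum; rewrite /smul.
under eq_bigr => a _ do under eq_bigr => b _ do
  rewrite -/(smul _ _ a b) smul_one_minus_xy_invE G_sum mulr_sumr.
under eq_bigr => a _ do rewrite exchange_big.
rewrite exchange_big; apply: eq_bigr => s _.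
rewrite -sum_hook_kernel mulr_sumr; apply: eq_bigr => a _; rewrite mulr_sumr.
by apply: eq_bigr => b _; ring.
Qed.

Lemma int_shift_const (T : Type) (f : int -> T) :
  (forall s, f (s + 1) = f s) -> forall s, f s = f 0.
Proof.
move=> fS.
have f_nat (k : nat) : f k%:Z = f 0 by elim: k => // k <-; rewrite -[RHS]fS; congr f; lia.
have f_opp (k : nat) : f (- k%:Z) = f 0.
  by elim: k => [|k <-]; rewrite ?oppr0 // -[LHS]fS; congr f; lia.
by case=> k; rewrite ?NegzE.
Qed.

(* The hypotheses say that [p && q] holds on an interval, that [r] is off at its left end
   and that [r] is on just past its right end. *)
Lemma sum_telescope_interval (r p q : nat -> bool) (N : nat) :
  (forall k, p k -> p k.+1) -> (forall k, q k.+1 -> q k) ->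
  (forall k, p k.+1 -> ~~ p k -> ~~ r k.+1) ->
  (forall k, q k -> ~~ q k.+1 -> r k.+1) ->
  ~~ (p 0%N && q 0%N) ->
  \sum_(0 <= k < N.+1) ((r k.+1)%:R - (r k)%:R) * (p k && q k)%:R =
  (if p N && q N then r N.+1 else has (fun k => p k && q k) (iota 0 N.+1))%:R :> int.
Proof.
move=> pS qS r_p r_q pq0.
have p_mono k l : (k <= l)%N -> p k -> p l.
  by move=> /subnK <-; elim: (l - k)%N => // d IH /IH; rewrite addSn; apply: pS.
elim: N => [|N IH]; first by rewrite big_nat1 (negbTE pq0) /= orbF (negbTE pq0) mulr0.
rewrite big_nat_recr // IH.
have -> : iota 0 N.+2 = iota 0 N.+1 ++ [:: N.+1] by rewrite -addn1 iotaD.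
rewrite has_cat has_seq1; set H := has _ (iota 0 N.+1).
case pqN: (p N && q N); case pqN1: (p N.+1 && q N.+1); rewrite /= ?orbF ?mulr1 ?mulr0 ?addr0.
- by rewrite addrC subrK.
- have [pN qN] := andP pqN.
  have qN1 : ~~ q N.+1 by move: pqN1; rewrite pS //= => ->.
  rewrite r_q // (_ : H) // /H.
  by apply/hasP; exists N; rewrite // mem_iota add0n ltnSn.
- have [pN1 qN1] := andP pqN1.
  have pN : ~~ p N by move: pqN; rewrite qS //= andbT => ->.
  rewrite (negbTE (r_p _ pN1 pN)) subr0 (_ : H = false) ?add0r // /H.
  apply/hasP => -[k]; rewrite mem_iota => /andP[_ kN] /andP[pk _].
  by case/negP: pN; apply: p_mono pk; lia.
- by [].
Qed.

(** * The staircase of a predicate on the integers *)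

Section Staircase.

Variables (R : pred int) (B : nat).
Hypothesis R_ge : forall z, B%:Z <= z -> R z.
Hypothesis R_le : forall z, z <= - B%:Z -> ~~ R z.

Definition xcount (s : int) : nat := icard (fun z => (s < z) && ~~ R z).
Definition ycount (s : int) : nat := icard (fun z => (z <= s) && R z).

Lemma xcount_finite (s : int) : ifinite (fun z => (s < z) && ~~ R z).
Proof.
exists (B + absz s)%N => z /andP[s_z Rz].
have : z < B%:Z by rewrite ltNge; apply: contra Rz; apply: R_ge.
lia.
Qed.

Lemma ycount_finite (s : int) : ifinite (fun z => (z <= s) && R z).
Proof.
exists (B + absz s)%N => z /andP[z_s Rz].
have : - B%:Z < z by rewrite ltNge; apply: contraL Rz; apply: R_le.
lia.
Qed.

Lemma xcountS (s : int) : xcount s = (xcount (s + 1)%R + ~~ R (s + 1)%R)%N.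
Proof.
rewrite /xcount (icardD1 (s + 1) (xcount_finite s)) ltr_pwDr //.
by congr (_ + _)%N; apply: eq_icard => z /=; case: (R z); rewrite ?andbF ?andbT; lia.
Qed.

Lemma ycountS (s : int) : ycount (s + 1) = (ycount s + R (s + 1)%R)%N.
Proof.
rewrite /ycount (icardD1 (s + 1) (ycount_finite (s + 1))) lexx.
by congr (_ + _)%N; apply: eq_icard => z /=; case: (R z); rewrite ?andbF ?andbT; lia.
Qed.

Lemma le_xcount (s t : int) : s <= t -> (xcount t <= xcount s)%N.
Proof.
move=> st; apply: sub_icard (xcount_finite s) _ => z /andP[tz Rz].
by rewrite Rz andbT (le_lt_trans st).
Qed.

Lemma le_ycount (s t : int) : s <= t -> (ycount s <= ycount t)%N.
Proof.
move=> st; apply: sub_icard (ycount_finite t) _ => z /andP[zs Rz].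
by rewrite Rz andbT (le_trans zs).
Qed.

Lemma ycount_sub_xcount (s : int) :
  (ycount s)%:Z - (xcount s)%:Z = s + ((ycount 0)%:Z - (xcount 0)%:Z).
Proof.
pose f t := (ycount t)%:Z - (xcount t)%:Z - t.
have fS t : f (t + 1) = f t.
  by rewrite /f ycountS (xcountS t); case: (R _); rewrite /= !PoszD; ring.
by have := int_shift_const fS s; rewrite /f subr0 => <-; ring.
Qed.

Lemma counts_inj (s t : int) : xcount s = xcount t -> ycount s = ycount t -> s = t.
Proof. by move=> Xst Yst; have := ycount_sub_xcount s; rewrite Xst Yst ycount_sub_xcount; lia. Qed.

Lemma xcount_le_or_ycount_le (s t : int) : (xcount s <= xcount t)%N || (ycount s <= ycount t)%N.
Proof. by case: (lerP s t) => [/le_ycount -> | /ltW /le_xcount ->]; rewrite ?orbT. Qed.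

Definition quadrant (i j : nat) : pred int := fun s => (xcount s < i)%N && (ycount s < j)%N.

Definition corner (i j : nat) : pred int := fun s => (xcount s == i) && (ycount s == j).

Lemma corner_up (i j d : nat) (s : int) : xcount s = i -> (ycount s + d)%N = j ->
  (exists t, corner i j t) \/ (exists t, quadrant i j t).
Proof.
elim: d s => [|d IH] s Xs Ys; first by left; exists s; rewrite /corner Xs -Ys addn0 !eqxx.
have := xcountS s; have := ycountS s; case: (R _) => /= YS XS.
  by apply: (IH (s + 1)); lia.
by right; exists (s + 1); apply/andP; lia.
Qed.

Lemma corner_down (i j d : nat) (s : int) : ycount s = j -> (xcount s + d)%N = i ->
  (exists t, corner i j t) \/ (exists t, quadrant i j t).
Proof.
elim: d s => [|d IH] s Ys Xs; first by left; exists s; rewrite /corner Ys -Xs addn0 !eqxx.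
have := xcountS (s - 1); have := ycountS (s - 1); rewrite subrK.
case: (R _) => /= YS XS; last by apply: (IH (s - 1)); lia.
by right; exists (s - 1); apply/andP; lia.
Qed.

Lemma quadrant_corner (i j : nat) (s : int) : quadrant i.+1 j.+1 s ->
  (exists t, corner i j t) \/ (exists t, quadrant i j t).
Proof.
move=> /andP[Xs Ys]; case: (ltnP (xcount s) i) => Xs'.
  case: (ltnP (ycount s) j) => Ys'; first by right; exists s; apply/andP.
  by apply: (corner_down (d := i - xcount s) (s := s)); lia.
by apply: (corner_up (d := j - ycount s) (s := s)); lia.
Qed.

Lemma has_quadrant_corner (w : seq int) (i j : nat) :
  (forall s, quadrant i.+1 j.+1 s -> s \in w) ->
  (has (quadrant i.+1 j.+1) w)%:R - (has (quadrant i j) w)%:R = (has (corner i j) w)%:R :> int.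
Proof.
move=> w_quadrant.
have corner_quadrant t : corner i j t -> quadrant i.+1 j.+1 t.
  by move=> /andP[/eqP <- /eqP <-]; rewrite /quadrant !ltnSn.
have [/hasP[t _ ct] | no_corner] := boolP (has (corner i j) w).
  have -> : has (quadrant i.+1 j.+1) w by apply/hasP; exists t; auto.
  have -> // : has (quadrant i j) w = false.
  apply/hasP => -[t' _ /andP[Xt' Yt']]; move: ct (xcount_le_or_ycount_le t t').
  by rewrite /corner => /andP[/eqP -> /eqP ->]; lia.
rewrite (_ : has (quadrant i j) w = has (quadrant i.+1 j.+1) w) ?subrr //.
apply/hasP/hasP => [[t tw /andP[Xt Yt]] | [s _ /quadrant_corner[[t ct] | [t qt]]]].
- by exists t => //; apply/andP; lia.
- by case/hasP: no_corner; exists t; auto.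
- by exists t => //; apply: w_quadrant; case/andP: qt => Xt Yt; apply/andP; lia.
Qed.

Lemma quadrant_zwindow (N i j : nat) (s : int) :
  (i <= xcount (- N%:Z))%N -> (j <= ycount N%:Z)%N -> quadrant i j s -> s \in zwindow N.
Proof.
move=> XN YN /andP[Xs Ys]; rewrite mem_zwindow.
have : - N%:Z < s by rewrite ltNge; apply/negP => /le_xcount; lia.
have : s < N%:Z by rewrite ltNge; apply/negP => /le_ycount; lia.
lia.
Qed.

Definition jump (s : int) : int := (R (s + 1))%:R - (R s)%:R.

Lemma sum_jump_quadrant (N i j : nat) :
  (i <= xcount (- N%:Z))%N -> (j <= ycount N%:Z)%N ->
  \sum_(s <- zwindow N) jump s * (quadrant i j s)%:R = (has (quadrant i j) (zwindow N))%:R.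
Proof.
move=> XN YN; have shift (k : nat) : k.+1%:Z - N%:Z = (k%:Z - N%:Z) + 1 by lia.
rewrite big_map has_map (_ : iota 0 _ = index_iota 0 N.*2.+1); last by rewrite /index_iota subn0.
under eq_bigr => k _ do rewrite /jump -shift.
rewrite (sum_telescope_interval (r := fun k => R (k%:Z - N%:Z))
  (p := fun k => (xcount (k%:Z - N%:Z) < i)%N) (q := fun k => (ycount (k%:Z - N%:Z) < j)%N)).
- rewrite (_ : ycount _ < j = false)%N ?andbF //.
  by apply/negbTE; rewrite -leqNgt; have -> : N.*2%:Z - N%:Z = N%:Z by lia.
- by move=> k; apply: leq_ltn_trans; apply: le_xcount; lia.
- by move=> k; apply: leq_ltn_trans; apply: le_ycount; lia.
- by move=> k; rewrite (xcountS (k%:Z - N%:Z)) shift; case: (R _); rewrite //= addn0 => ->.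
- by move=> k; rewrite shift ycountS; case: (R _); rewrite //= addn0 => ->.
- by rewrite sub0r /= ltnNge XN.
Qed.

Definition up : pred int := fun s => ~~ R s && R (s + 1).

Definition down : pred int := fun s => R s && ~~ R (s + 1).

Lemma jump_up_down (s : int) : jump s = (up s)%:R - (down s)%:R.
Proof. by rewrite /jump /up /down; case: (R s); case: (R (s + 1)). Qed.

Lemma up_bound (s : int) : up s -> (absz s <= B)%N.
Proof.
case/andP=> notRs Rs1.
have : s < B%:Z by rewrite ltNge; apply: contra notRs; apply: R_ge.
have : - B%:Z < s + 1 by rewrite ltNge; apply: contraL Rs1; apply: R_le.
lia.
Qed.

Lemma down_bound (s : int) : down s -> (absz s <= B)%N.
Proof.
case/andP=> Rs notRs1.
have : - B%:Z < s by rewrite ltNge; apply: contraL Rs; apply: R_le.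
have : s + 1 < B%:Z by rewrite ltNge; apply: contra notRs1; apply: R_ge.
lia.
Qed.

Lemma up_finite : ifinite up.
Proof. by exists B; apply: up_bound. Qed.

Lemma down_finite : ifinite down.
Proof. by exists B; apply: down_bound. Qed.

Lemma sum_jump_zwindow (N : nat) : (B <= N)%N -> \sum_(s <- zwindow N) jump s = 1.
Proof.
move=> BN; rewrite big_map (_ : iota 0 _ = index_iota 0 N.*2.+1); last by rewrite /index_iota subn0.
have shift (k : nat) : k%:Z - N%:Z + 1 = k.+1%:Z - N%:Z by lia.
under eq_bigr => k _ do rewrite /jump shift.
rewrite (telescope_sumr (fun k => (R (k%:Z - N%:Z))%:R)) //.
by rewrite R_ge 1?(negbTE (R_le _)) //; lia.
Qed.

Lemma icard_up : icard up = (icard down).+1.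
Proof.
rewrite (icardE up_bound) (icardE down_bound).
suff : (count up (zwindow B))%:R - (count down (zwindow B))%:R = 1 :> int by lia.
rewrite !natr_count -sumrB -[RHS](sum_jump_zwindow (leqnn B)).
by apply: eq_bigr => s _; rewrite jump_up_down.
Qed.

Definition fiber (P : pred int) (i j : nat) : pred int := fun s => P s && corner i j s.

Lemma fiber_finite (i j : nat) : ifinite (fiber predT i j).
Proof.
exists (absz (j%:Z - i%:Z - ((ycount 0)%:Z - (xcount 0)%:Z))%R).
move=> s /andP[_ /andP[/eqP Xs /eqP Ys]].
by have := ycount_sub_xcount s; rewrite Xs Ys; lia.
Qed.

Theorem staircase_series :
  (fun i j => (icard (fiber predT i j))%:Z) =
  smul (smul one_minus_xy inv_1mx_1my)
       (fun i j => (icard (fiber up i j))%:Z - (icard (fiber down i j))%:Z).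
Proof.
apply: functional_extensionality => i; apply: functional_extensionality => j.
pose c := (ycount 0)%:Z - (xcount 0)%:Z; pose N := (B + i + j + absz c).+1.
(* The window [-N, N] contains [up], [down] and the closed quadrant at (i, j). *)
have XN : (i < xcount (- N%:Z))%N by have := ycount_sub_xcount (- N%:Z); rewrite -/c; lia.
have YN : (j < ycount N%:Z)%N by have := ycount_sub_xcount N%:Z; rewrite -/c; lia.
have fiber_window (P : pred int) (a b : nat) : (forall s, P s -> (absz s <= B)%N) ->
    icard (fiber P a b) = count (fiber P a b) (zwindow N).
  by move=> P_B; apply: icardE => s /andP[/P_B + _]; lia.
rewrite (coef_smul_hook (g := jump) (X := xcount) (Y := ycount) (w := zwindow N)); last first.
  move=> a b; rewrite !fiber_window; [|exact: down_bound|exact: up_bound].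
  rewrite -!natz !natr_count -sumrB; apply: eq_bigr => s _.
  rewrite jump_up_down /fiber /up /down -/(corner a b s).
  by case: (R s); case: (R (s + 1)); case: (corner a b s).
under eq_bigr do rewrite mulrBr.
rewrite sumrB !sum_jump_quadrant ?(ltnW XN) ?(ltnW YN) // has_quadrant_corner; last first.
  by move=> s; apply: quadrant_zwindow.
rewrite (icardE (N := N)); last first.
  move=> s /andP[_ /andP[/eqP Xs /eqP Ys]]; rewrite -mem_zwindow.
  by apply: (quadrant_zwindow XN YN); rewrite /quadrant Xs Ys !ltnSn.
rewrite count_subsingleton ?zwindow_uniq //; last first.
  move=> s t /andP[_ /andP[/eqP Xs /eqP Ys]] /andP[_ /andP[/eqP Xt /eqP Yt]].
  by apply: counts_inj; rewrite ?Xs ?Ys.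
by rewrite -natz.
Qed.

End Staircase.

Section Configurations.

Variables (m n : nat) (u : config m n).

Lemma rvec_upd (s : int) (k : 'I_n) : rvec (upd u s) k = rvec u k.
Proof.
rewrite /rvec /upd /=; congr (_ - (_)%:Z); apply: eq_card => j; rewrite !inE /=.
by case j_lt: (val j < m.-1)%N => //=; rewrite (ltn_eqF j_lt).
Qed.

Lemma right_pt_upd (s : int) : right_pt (upd u s) = right_pt u.
Proof.
apply: functional_extensionality => z; rewrite /right_pt /rvec_nat.
by case: insubP => [k _ _|_] //=; rewrite rvec_upd.
Qed.

Lemma sinkval_upd (s : int) : (0 < m)%N -> sinkval (upd u s) = s.
Proof.
move=> m_gt0; rewrite /sinkval; case: insubP => [i _ i_sink | ] /=.
  by rewrite /upd /= i_sink eqxx.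
by rewrite prednK ?leqnn.
Qed.

Lemma mono_coef_fiber : (0 < m)%N -> mono_coef u = fiber (right_pt u).
Proof.
move=> m_gt0; do 4![apply: functional_extensionality => ?].
by rewrite /mono_coef /fiber /corner /xpara /ypara /left_pt sinkval_upd // right_pt_upd andbA.
Qed.

Lemma right_pt_eventually : (0 < n)%N -> exists B : nat,
  (forall z, B%:Z <= z -> right_pt u z) /\ (forall z, z <= - B%:Z -> ~~ right_pt u z).
Proof.
move=> n_gt0; pose M := (\sum_(k < n) absz (rvec u k))%N.
have rvec_M k : (absz (rvec_nat u k) <= M)%N.
  by rewrite /rvec_nat; case: insubP => [o _ _ | _] //=; rewrite /M (bigD1 o) //= leq_addr.
have n_pos : 0 < n%:Z by rewrite ltz_nat.
exists (n * M.+1)%N; split => z z_B; rewrite /right_pt; have := rvec_M (absz (z %% n%:Z)%Z).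
  have : M.+1%:Z <= (z %/ n%:Z)%Z by rewrite lez_divRL //; move: z_B; rewrite PoszM; lia.
  lia.
have : (z %/ n%:Z)%Z * n%:Z <= - M.+1%:Z * n%:Z.
  by apply: le_trans (lez_floor _ (lt0r_neq0 n_pos)) _; move: z_B; rewrite PoszM; lia.
rewrite ler_pM2r // -ltNge; lia.
Qed.

End Configurations.

Theorem lemma15p1 (m n : nat) (hm : (0 < m)%N) (hn : (0 < n)%N)
    (u : config m n) (hpark : parking u) (hsort : sorted_config u) :
  (* well-definedness of xpara, ypara and of the series F_u *)
  (forall s : int,
      ifinite (fun sigma => (sinkval (upd u s) < sigma) && left_pt (upd u s) sigma) /\
      ifinite (fun sigma => (sigma <= sinkval (upd u s)) && right_pt (upd u s) sigma)) /\
  (forall i j : nat, ifinite (mono_coef u predT i j)) /\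
  (* S_u^+ and S_u^- are finite with |S_u^+| = |S_u^-| + 1 *)
  ifinite (Splus u) /\ ifinite (Sminus u) /\
  icard (Splus u) = (icard (Sminus u)).+1 /\
  (* F_u = (1 - xy)/((1-x)(1-y)) * (sum_{S+} - sum_{S-}) *)
  Fu u = smul (smul one_minus_xy inv_1mx_1my) (Gu u).
Proof.
have [B [R_ge R_le]] := right_pt_eventually u hn.
split=> [s | ].
  rewrite sinkval_upd // /left_pt right_pt_upd.
  by split; [exact: (xcount_finite R_ge) | exact: (ycount_finite R_le)].
split=> [i j | ]; first by rewrite mono_coef_fiber //; exact: (fiber_finite R_ge R_le).
split; first exact: (up_finite R_ge R_le).
split; first exact: (down_finite R_ge R_le).
split; first exact: (icard_up R_ge R_le).
by rewrite /Fu /Gu mono_coef_fiber //; exact: (staircase_series R_ge R_le).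
Qed.
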